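(* Let $m\ge 2$ be an integer, let $B\subseteq m\mathbb Z$ be a finite nonempty set, and let $F\subseteq\mathbb Z$ be a finite nonempty set all of whose elements are congruent to $\tilde f$ modulo $m$, where $\tilde f\in\{1,\dots,m-1\}$. Suppose there exist an integer $n\ge1$ and sets $S_1,\dots,S_n$ with $S_1\cup\cdots\cup S_n=m\mathbb N\cup B$ such that for each $i$ there is $W_i\subseteq\mathbb Z$ with $m\mathbb Z\setminus S_i=F+W_i$. If \[m\ge \tilde f+2\tilde f\left\lfloor\frac{n}{\tilde f}\right\rfloor+\operatorname{mod}_{\tilde f}n,\] then $C=m\mathbb N\cup B\cup F$ arises as a minimal additive complement in $\mathbb Z$.
   Context: $\mathbb N=\{0,1,2,\dots\}$, $m\mathbb N=\{mk:k\in\mathbb N\}$; $\operatorname{mod}_{a}n$ denotes the remainder of $n$ upon division by $a$. For $C,W\subseteq\mathbb Z$, $C+W=\{c+w:c\in C,w\in W\}$. $C$ is a minimal additive complement (MAC) to $W$ if $C+W=\mathbb Z$ and no proper subset $C'\subsetneq C$ satisfies $C'+W=\mathbb Z$. $C$ arises as a MAC if there exists $W\subseteq\mathbb Z$ to which $C$ is a MAC. *)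

(* integers are Z, subsets of Z are predicates Z -> Prop,
   finite subsets of Z are given by lists (the set of their elements). *)
From Stdlib Require Export ZArith List.
Open Scope Z_scope.

Definition sumset (C W : Z -> Prop) : Z -> Prop :=
  fun z => exists c w, C c /\ W w /\ z = c + w.

Definition is_MAC (C W : Z -> Prop) : Prop :=
  (forall z, sumset C W z) /\
  forall C' : Z -> Prop,
    (forall x, C' x -> C x) -> (exists x, C x /\ ~ C' x) ->
    ~ (forall z, sumset C' W z).

Definition arises_as_MAC (C : Z -> Prop) : Prop :=
  exists W : Z -> Prop, is_MAC C W.

Definition mN (m : Z) : Z -> Prop := fun z => exists k, 0 <= k /\ z = m * k.

From Stdlib Require Import ZArith List Lia Classical.
Open Scope Z_scope.

(* For each g in F reserve a point z_g of mZ far below C.  Since mZ \ S_i is an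
   F-sumset, one can choose Y_i with F + Y_i = mZ \ S_i in which z_g is reached
   only as g + (z_g - g).  The size condition on m is exactly what is needed to
   place residues r_1 < ... < r_n in [ft, m) in the blocks [ft, 2ft), [3ft, 4ft),
   ..., so that no r_i - ft is some r_j.  Then
     W = {r_i} u U_i (r_i + Y_i) u {w : w mod m is no r_i and no r_i - ft}
   is complemented by C: the class of r_i is S_i + r_i together with
   F + (r_i + Y_i), the class of r_i - ft is mN + (r_i + Y_i), every other
   class is 0 + W.  Modulo m, x + r_i with x in S_i can only be written as
   x + r_i or as f + (r_i + y) with f + y = x, which is excluded; and
   z_g + r_1 only as g + (r_1 + z_g - g).  So no element of C can be dropped. *)

Lemma list_abs_bound (l : list Z) : exists K, 0 < K /\ forall x, In x l -> Z.abs x < K.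
Proof.
  induction l as [|y l [K [HK Hl]]].
  - exists 1. split; [lia | intros x []].
  - exists (Z.max K (Z.abs y + 1)). split; [lia|].
    intros x [<- | Hx]; [lia|]. specialize (Hl x Hx). lia.
Qed.

Lemma list_has_min (l : list Z) :
  l <> nil -> exists a, In a l /\ forall x, In x l -> a <= x.
Proof.
  induction l as [|y l IH]; [tauto|]. intros _.
  destruct l as [|z l].
  - exists y. split; [now left|]. intros x [<- | []]; lia.
  - destruct IH as [a [Ha Hmin]]; [discriminate|].
    exists (Z.min y a). split.
    + destruct (Z.min_spec y a) as [[_ ->] | [_ ->]]; [now left | now right].
    + intros x [<- | Hx]; [lia|]. specialize (Hmin x Hx). lia.
Qed.

Lemma list_has_max (l : list Z) :
  l <> nil -> exists a, In a l /\ forall x, In x l -> x <= a.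
Proof.
  intros Hl. destruct (list_has_min (map Z.opp l)) as [a [Ha Hmin]].
  { destruct l; [contradiction | discriminate]. }
  apply in_map_iff in Ha as [b [<- Hb]].
  exists b. split; [exact Hb|].
  intros x Hx. specialize (Hmin (- x) (in_map _ _ _ Hx)). lia.
Qed.

(* The translates of F by y - min F and y - max F could only meet R in two
   points closer than 4D, which must then both be y. *)
Lemma translate_avoiding_separated (F : list Z) (D : Z) (R : Z -> Prop) :
  F <> nil -> (forall f, In f F -> Z.abs f < D) ->
  (forall z z', R z -> R z' -> Z.abs (z - z') < 4 * D -> z = z') ->
  forall y, ~ R y -> exists f, In f F /\ forall f', In f' F -> ~ R (y - f + f').
Proof.
  intros HF HD Hsep y Hy.
  destruct (list_has_min F HF) as [fmin [Hfmin Hmin]].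
  destruct (list_has_max F HF) as [fmax [Hfmax Hmax]].
  destruct (classic (exists f', In f' F /\ R (y - fmin + f'))) as [[f' [Hf' Hr]] | Hno].
  - exists fmax. split; [exact Hfmax|]. intros f'' Hf'' Hr'.
    pose proof (Hmin f' Hf'); pose proof (Hmax f' Hf').
    pose proof (Hmin f'' Hf''); pose proof (Hmax f'' Hf'').
    pose proof (HD fmin Hfmin); pose proof (HD fmax Hfmax).
    pose proof (Hsep _ _ Hr Hr' ltac:(lia)).
    apply Hy. replace y with (y - fmin + f') by lia. exact Hr.
  - exists fmin. split; [exact Hfmin|]. intros f' Hf' Hr. apply Hno. eauto.
Qed.

Lemma divide_sub_iff_mod (m z r : Z) :
  0 < m -> 0 <= r < m -> (m | z - r) <-> z mod m = r.
Proof.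
  intros Hm Hr. split.
  - intros [k Hk]. symmetry. apply (Z.mod_unique z m k r); lia.
  - intros <-. exists (z / m). rewrite Z.mod_eq by lia. ring.
Qed.

Lemma mN_of_divide_nonneg (m c : Z) : 0 < m -> (m | c) -> 0 <= c -> mN m c.
Proof. intros Hm [k ->] Hc. exists k. split; [nia | ring]. Qed.

Lemma is_MAC_ext (C C' W : Z -> Prop) :
  (forall z, C z <-> C' z) -> is_MAC C W -> is_MAC C' W.
Proof.
  intros HCC' [Hcover Hmin]. split.
  - intros z. destruct (Hcover z) as [c [w [Hc Hw]]]. exists c, w. now rewrite <- HCC'.
  - intros C'' Hsub [x [Hx Hnx]]. apply Hmin.
    + intros y Hy. apply HCC', Hsub, Hy.
    + exists x. now rewrite HCC'.
Qed.

Definition residue_code (ft i : Z) : Z := ft + 2 * ft * ((i - 1) / ft) + (i - 1) mod ft.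

Ltac div_mod_facts x d :=
  pose proof (Z.div_mod x d ltac:(lia)); pose proof (Z.mod_pos_bound x d ltac:(lia)).

Lemma residue_code_bounds (ft m n i : Z) : 1 <= ft -> 1 <= i <= n ->
  ft + 2 * ft * (n / ft) + n mod ft <= m -> ft <= residue_code ft i <= m - 1.
Proof.
  intros Hft Hi Hm. unfold residue_code.
  div_mod_facts (i - 1) ft. div_mod_facts n ft.
  assert (0 <= (i - 1) / ft) by (apply Z.div_pos; lia).
  set (a := (i - 1) / ft) in *. set (q := n / ft) in *.
  destruct (Z.lt_trichotomy a q) as [|[|]]; nia.
Qed.

Lemma residue_code_inj (ft i j : Z) : 1 <= ft ->
  residue_code ft i = residue_code ft j -> i = j.
Proof.
  intros Hft. unfold residue_code.
  div_mod_facts (i - 1) ft. div_mod_facts (j - 1) ft.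
  set (a := (i - 1) / ft) in *. set (a' := (j - 1) / ft) in *.
  destruct (Z.lt_trichotomy a a') as [|[|]]; nia.
Qed.

Lemma residue_code_shift_neq (ft i j : Z) : 1 <= ft ->
  residue_code ft i <> residue_code ft j - ft.
Proof.
  intros Hft. unfold residue_code.
  div_mod_facts (i - 1) ft. div_mod_facts (j - 1) ft.
  set (a := (i - 1) / ft) in *. set (a' := (j - 1) / ft) in *.
  destruct (Z.lt_ge_cases a a'); nia.
Qed.

Section ReservedPoints.

Variables (m K : Z) (F : list Z).
Hypotheses (m_pos : 0 < m) (F_nonempty : F <> nil)
  (F_bound : forall f, In f F -> Z.abs f < K).

(* Depth and spacing of at least 8K exceed every gap 4K that translates of F
   can bridge. *)
Definition reserved_point (g : Z) : Z := 8 * K * m * (g - K).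

Definition is_reserved (z : Z) : Prop := exists g, In g F /\ z = reserved_point g.

Lemma bound_pos : 0 < K.
Proof.
  destruct F as [|f F']; [contradiction|].
  pose proof (F_bound f (or_introl eq_refl)). lia.
Qed.

Lemma reserved_point_divide (g : Z) : (m | reserved_point g).
Proof. exists (8 * K * (g - K)). unfold reserved_point. ring. Qed.

Lemma reserved_point_le (g : Z) : In g F -> reserved_point g <= -8 * K.
Proof.
  intros Hg. pose proof (F_bound g Hg). pose proof bound_pos.
  unfold reserved_point.
  assert (8 * K * m * (g - K) <= 8 * K * m * (-1)) by (apply Z.mul_le_mono_nonneg_l; lia).
  nia.
Qed.

Lemma reserved_point_close (g h : Z) :
  Z.abs (reserved_point g - reserved_point h) < 8 * K -> g = h.
Proof.
  pose proof bound_pos. unfold reserved_point. intros Hgh.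
  destruct (Z.eq_dec g h) as [|Hne]; [assumption | exfalso].
  replace (8 * K * m * (g - K) - 8 * K * m * (h - K)) with (8 * K * m * (g - h)) in Hgh by ring.
  rewrite Z.abs_mul, (Z.abs_eq (8 * K * m)) in Hgh by nia.
  assert (8 * K * m * 1 <= 8 * K * m * Z.abs (g - h))
    by (apply Z.mul_le_mono_nonneg_l; lia).
  nia.
Qed.

Lemma is_reserved_separated (z z' : Z) :
  is_reserved z -> is_reserved z' -> Z.abs (z - z') < 4 * K -> z = z'.
Proof.
  intros [g [_ ->]] [h [_ ->]] Hzz'.
  rewrite (reserved_point_close g h); [reflexivity | lia].
Qed.

Section ReservingTranslates.

Variable S : Z -> Prop.
Hypotheses (F_congruent : forall f g, In f F -> In g F -> (m | f - g))
  (S_lower : forall s, S s -> - K < s)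
  (S_complement : exists W, forall z,
     (m | z) /\ ~ S z <-> sumset (fun f => In f F) W z).

(* Reserved points are kept out of the first kind of translate, so that
   reserved_point g is reached only as g + (reserved_point g - g). *)
Definition reserving_translates (v : Z) : Prop :=
  (forall f, In f F -> (m | f + v) /\ ~ S (f + v) /\ ~ is_reserved (f + v))
  \/ exists g, In g F /\ v = reserved_point g - g.

Lemma reserving_translates_sound (v f : Z) :
  reserving_translates v -> In f F -> (m | f + v) /\ ~ S (f + v).
Proof.
  intros [Hall | [g [Hg ->]]] Hf; [now destruct (Hall f Hf) as [? [? _]]|].
  replace (f + (reserved_point g - g)) with (reserved_point g + (f - g)) by ring.
  split.
  - apply Z.divide_add_r; [apply reserved_point_divide | exact (F_congruent f g Hf Hg)].
  - intros Hs. apply S_lower in Hs. pose proof (reserved_point_le g Hg).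
    pose proof (F_bound f Hf); pose proof (F_bound g Hg). lia.
Qed.

Lemma reserving_translates_complete (y : Z) : (m | y) -> ~ S y ->
  exists f v, In f F /\ reserving_translates v /\ y = f + v.
Proof.
  intros Hy HSy.
  destruct (classic (is_reserved y)) as [[g [Hg ->]] | Hnr].
  { exists g, (reserved_point g - g). split; [exact Hg|]. split; [right; eauto | ring]. }
  destruct (Z_lt_le_dec y (-3 * K)) as [Hlow | Hhigh].
  - destruct (translate_avoiding_separated F K is_reserved F_nonempty F_bound
                is_reserved_separated y Hnr) as [f [Hf Havoid]].
    exists f, (y - f). split; [exact Hf|]. split; [left | ring].
    intros f' Hf'. replace (f' + (y - f)) with (y - f + f') by ring.
    split; [|split; [|exact (Havoid f' Hf')]].
    + replace (y - f + f') with (y + (f' - f)) by ring.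
      apply Z.divide_add_r; auto.
    + intros Hs. apply S_lower in Hs.
      pose proof (F_bound f Hf); pose proof (F_bound f' Hf'). lia.
  - destruct S_complement as [W HW].
    destruct (proj1 (HW y) (conj Hy HSy)) as [f [w [Hf [Hw ->]]]].
    exists f, w. split; [exact Hf|]. split; [left | reflexivity].
    intros f' Hf'. destruct (proj2 (HW (f' + w))) as [Hd Hs]; [exists f', w; auto|].
    split; [exact Hd|]. split; [exact Hs|].
    intros [g [Hg Heq]]. pose proof (reserved_point_le g Hg).
    pose proof (F_bound f Hf); pose proof (F_bound f' Hf'). lia.
Qed.

Lemma reserving_translates_unique (v c g : Z) : reserving_translates v ->
  In c F -> In g F -> c + v = reserved_point g -> c = g.
Proof.
  intros [Hall | [h [Hh ->]]] Hc Hg Hcv.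
  - exfalso. destruct (Hall c Hc) as [_ [_ Hnr]]. apply Hnr. now exists g.
  - pose proof (F_bound c Hc); pose proof (F_bound h Hh).
    assert (g = h) by (apply reserved_point_close; lia). subst h. lia.
Qed.

End ReservingTranslates.

End ReservedPoints.

Section MinimalComplement.

Variables (m ft n K : Z) (F : list Z) (A : Z -> Prop) (S : Z -> Z -> Prop).
Hypotheses (m_pos : 0 < m) (ft_pos : 1 <= ft) (n_pos : 1 <= n)
  (m_large : ft + 2 * ft * (n / ft) + n mod ft <= m)
  (F_nonempty : F <> nil) (F_mod : forall f, In f F -> f mod m = ft)
  (F_bound : forall f, In f F -> Z.abs f < K)
  (A_divide : forall a, A a -> (m | a)) (A_lower : forall a, A a -> - K < a)
  (mN_sub : forall z, mN m z -> A z)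
  (S_cover : forall z, (exists i, 1 <= i <= n /\ S i z) <-> A z)
  (S_complement : forall i, 1 <= i <= n -> exists W, forall z,
     (m | z) /\ ~ S i z <-> sumset (fun f => In f F) W z).

Let r := residue_code ft.
Let Y i := reserving_translates m K F (S i).

Definition candidate (z : Z) : Prop := A z \/ In z F.

Definition partner (w : Z) : Prop :=
  (exists i, 1 <= i <= n /\ w = r i)
  \/ (exists i, 1 <= i <= n /\ Y i (w - r i))
  \/ (forall i, 1 <= i <= n -> w mod m <> r i /\ w mod m <> r i - ft).

Lemma code_bounds (i : Z) : 1 <= i <= n -> ft <= r i <= m - 1.
Proof. intros Hi. exact (residue_code_bounds ft m n i ft_pos Hi m_large). Qed.

Lemma F_divide_sub_ft (f : Z) : In f F -> (m | f - ft).
Proof.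
  intros Hf. pose proof (code_bounds 1 ltac:(lia)).
  apply divide_sub_iff_mod; [lia | lia | exact (F_mod f Hf)].
Qed.

Lemma F_congruent (f g : Z) : In f F -> In g F -> (m | f - g).
Proof.
  intros Hf Hg. replace (f - g) with ((f - ft) - (g - ft)) by ring.
  apply Z.divide_sub_r; apply F_divide_sub_ft; assumption.
Qed.

Lemma S_lower (i : Z) : 1 <= i <= n -> forall s, S i s -> - K < s.
Proof. intros Hi s Hs. apply A_lower, S_cover. eauto. Qed.

Lemma K_pos : 0 < K.
Proof. eapply bound_pos; eassumption. Qed.

Lemma F_inhabited : exists f, In f F.
Proof. destruct F as [|f F']; [contradiction | exists f; now left]. Qed.

Lemma Y_sound (i v f : Z) : 1 <= i <= n -> Y i v -> In f F ->
  (m | f + v) /\ ~ S i (f + v).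
Proof.
  intros Hi. pose proof (S_lower i Hi).
  apply reserving_translates_sound; auto using F_congruent.
Qed.

Lemma Y_complete (i y : Z) : 1 <= i <= n -> (m | y) -> ~ S i y ->
  exists f v, In f F /\ Y i v /\ y = f + v.
Proof.
  intros Hi. pose proof (S_lower i Hi).
  apply reserving_translates_complete; auto using F_congruent.
Qed.

Lemma Y_unique (i v c g : Z) : 1 <= i <= n -> Y i v -> In c F -> In g F ->
  c + v = reserved_point m K g -> c = g.
Proof. intros Hi. apply reserving_translates_unique; auto using F_congruent. Qed.

Lemma Y_divide (i v : Z) : 1 <= i <= n -> Y i v -> (m | v + ft).
Proof.
  intros Hi Hv. destruct F_inhabited as [f Hf].
  replace (v + ft) with ((f + v) - (f - ft)) by ring.
  apply Z.divide_sub_r; [apply (Y_sound i v f Hi Hv Hf) | exact (F_divide_sub_ft f Hf)].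
Qed.

Lemma Y_shift_mod (i w : Z) : 1 <= i <= n -> Y i (w - r i) -> w mod m = r i - ft.
Proof.
  intros Hi Hy. pose proof (code_bounds i Hi).
  apply divide_sub_iff_mod; [lia | lia|].
  replace (w - (r i - ft)) with ((w - r i) + ft) by ring.
  exact (Y_divide i _ Hi Hy).
Qed.

Lemma partner_code (i w : Z) : 1 <= i <= n -> partner w -> w mod m = r i -> w = r i.
Proof.
  intros Hi [[j [Hj ->]] | [[j [Hj Hy]] | Hother]] Hw.
  - pose proof (code_bounds j Hj). now rewrite Z.mod_small in Hw by lia.
  - exfalso. rewrite (Y_shift_mod j w Hj Hy) in Hw.
    exact (residue_code_shift_neq ft i j ft_pos (eq_sym Hw)).
  - exfalso. exact (proj1 (Hother i Hi) Hw).
Qed.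

Lemma partner_shifted_code (i w : Z) : 1 <= i <= n -> partner w ->
  w mod m = r i - ft -> Y i (w - r i).
Proof.
  intros Hi [[j [Hj ->]] | [[j [Hj Hy]] | Hother]] Hw.
  - exfalso. pose proof (code_bounds j Hj). rewrite Z.mod_small in Hw by lia.
    exact (residue_code_shift_neq ft j i ft_pos Hw).
  - rewrite (Y_shift_mod j w Hj Hy) in Hw.
    assert (j = i) by (apply (residue_code_inj ft); [exact ft_pos | fold r; lia]).
    now subst j.
  - exfalso. exact (proj2 (Hother i Hi) Hw).
Qed.

Lemma candidate_partner_decomposition (c w i : Z) : 1 <= i <= n ->
  candidate c -> partner w -> (m | c + w - r i) ->
  (A c /\ w = r i) \/ (In c F /\ Y i (w - r i)).
Proof.
  intros Hi [Ac | Fc] Hw Hd; pose proof (code_bounds i Hi).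
  - left. split; [exact Ac|]. apply (partner_code i w Hi Hw).
    apply divide_sub_iff_mod; [lia | lia|].
    replace (w - r i) with ((c + w - r i) - c) by ring.
    exact (Z.divide_sub_r _ _ _ Hd (A_divide c Ac)).
  - right. split; [exact Fc|]. apply (partner_shifted_code i w Hi Hw).
    apply divide_sub_iff_mod; [lia | lia|].
    replace (w - (r i - ft)) with ((c + w - r i) - (c - ft)) by ring.
    exact (Z.divide_sub_r _ _ _ Hd (F_divide_sub_ft c Fc)).
Qed.

Lemma partner_translate (i v : Z) : 1 <= i <= n -> Y i v -> partner (r i + v).
Proof.
  intros Hi Hv. right; left. exists i. split; [exact Hi|].
  now replace (r i + v - r i) with v by ring.
Qed.

Lemma candidate_partner_cover (z : Z) : sumset candidate partner z.
Proof.
  destruct (classic (exists i, 1 <= i <= n /\ z mod m = r i)) as [[i [Hi Hz]] | Hno_code].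
  { pose proof (code_bounds i Hi).
    assert (Hd : (m | z - r i)) by (apply divide_sub_iff_mod; lia).
    destruct (classic (S i (z - r i))) as [Hs | Hs].
    - exists (z - r i), (r i). split; [left; apply S_cover; eauto|].
      split; [left; eauto | ring].
    - destruct (Y_complete i (z - r i) Hi Hd Hs) as [f [v [Hf [Hv Hzv]]]].
      exists f, (r i + v). split; [right; exact Hf|].
      split; [exact (partner_translate i v Hi Hv) | lia]. }
  destruct (classic (exists i, 1 <= i <= n /\ z mod m = r i - ft))
    as [[i [Hi Hz]] | Hno_shift].
  { pose proof (code_bounds i Hi).
    (* y := -m(|z| + K + m) is a multiple of m below S i, low enough that
       z - r i - v >= 0 *)
    destruct (Y_complete i (- m * (Z.abs z + K + m)) Hi) as [f [v [Hf [Hv Hyv]]]].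
    { exists (- (Z.abs z + K + m)). ring. }
    { intros Hs. pose proof (S_lower i Hi _ Hs). pose proof K_pos. nia. }
    exists (z - r i - v), (r i + v).
    split; [|split; [exact (partner_translate i v Hi Hv) | ring]].
    left. apply mN_sub, mN_of_divide_nonneg; [exact m_pos | |].
    - replace (z - r i - v) with ((z - (r i - ft)) - (v + ft)) by ring.
      apply Z.divide_sub_r; [apply divide_sub_iff_mod; lia | exact (Y_divide i v Hi Hv)].
    - pose proof (F_bound f Hf). nia. }
  exists 0, z. split; [left; apply mN_sub; exists 0; lia|].
  split; [|ring]. right; right.
  intros i Hi. split; intros Hz; [apply Hno_code | apply Hno_shift]; eauto.
Qed.

Lemma candidate_minimal (C' : Z -> Prop) :
  (forall x, C' x -> candidate x) -> (exists x, candidate x /\ ~ C' x) ->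
  ~ (forall z, sumset C' partner z).
Proof.
  intros Hsub [x [[Ax | Fx] HC'x]] Hcover.
  - destruct (proj2 (S_cover x) Ax) as [i [Hi Hsx]].
    destruct (Hcover (x + r i)) as [c [w [Hc [Hw Hz]]]].
    destruct (candidate_partner_decomposition c w i Hi (Hsub c Hc) Hw)
      as [[_ ->] | [Fc Hy]].
    { replace (c + w - r i) with x by lia. exact (A_divide x Ax). }
    + apply HC'x. replace x with c by lia. exact Hc.
    + apply (proj2 (Y_sound i _ c Hi Hy Fc)).
      now replace (c + (w - r i)) with x by lia.
  - assert (H1 : 1 <= 1 <= n) by lia.
    destruct (Hcover (reserved_point m K x + r 1)) as [c [w [Hc [Hw Hzcw]]]].
    destruct (candidate_partner_decomposition c w 1 H1 (Hsub c Hc) Hw)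
      as [[Ac ->] | [Fc Hy]].
    { replace (c + w - r 1) with (reserved_point m K x) by lia. apply reserved_point_divide. }
    + pose proof (A_lower c Ac).
      pose proof (reserved_point_le m K F m_pos F_nonempty F_bound x Fx).
      pose proof K_pos. lia.
    + apply HC'x. replace x with c; [exact Hc|].
      apply (Y_unique 1 (w - r 1) c x H1 Hy Fc Fx). lia.
Qed.

Theorem candidate_is_MAC : is_MAC candidate partner.
Proof. split; [exact candidate_partner_cover | exact candidate_minimal]. Qed.

End MinimalComplement.

Theorem theorem4 (m ft n : Z) (B F : list Z) (S : Z -> Z -> Prop) :
  2 <= m ->
  B <> nil -> (forall b, In b B -> (m | b)) ->
  1 <= ft <= m - 1 ->
  F <> nil -> (forall f, In f F -> f mod m = ft) ->
  1 <= n ->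
  (forall z, (exists i, 1 <= i <= n /\ S i z) <-> (mN m z \/ In z B)) ->
  (forall i, 1 <= i <= n ->
     exists W : Z -> Prop,
       forall z, ((m | z) /\ ~ S i z) <-> sumset (fun f => In f F) W z) ->
  ft + 2 * ft * (n / ft) + n mod ft <= m ->
  arises_as_MAC (fun z => mN m z \/ In z B \/ In z F).
Proof.
  intros Hm _ HB [Hft _] HF HFmod Hn HScover HScompl Hmn.
  destruct (list_abs_bound (F ++ B)) as [K [HKpos HK]].
  exists (partner m ft n K F S).
  apply (is_MAC_ext (candidate F (fun z => mN m z \/ In z B))).
  { intros z. unfold candidate. tauto. }
  apply candidate_is_MAC; try assumption; try lia.
  - intros f Hf. apply HK, in_or_app. now left.
  - intros a [[k [_ ->]] | Ha]; [exists k; ring | exact (HB a Ha)].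
  - intros a [[k [Hk ->]] | Ha]; [nia|].
    pose proof (HK a (in_or_app F B a (or_intror Ha))). lia.
  - intros z Hz. now left.
Qed.
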